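(* Let $q$ be a prime power, $S \subset \mathbb{F}_q^n$, $0 < \sigma < \tau$, and let $3 \le k \le n$ be an integer such that $E_{k-2}(S) \geq q$. Let $T \in \mathcal{L}_k(\mathbb{F}_q^n)$ be $\tau$-unbalanced with respect to $S$, and let $R$ be chosen uniformly at random from the set of $(k-2)$-flats contained in $T$. Then $$\Pr[R \text{ is } \sigma\text{-unbalanced with respect to } S] \geq 1 - \frac{1+\tau}{(\tau-\sigma)^2 q}.$$
   Context: $\mathcal{L}_j(\mathbb{F}_q^n)$ denotes the set of $j$-dimensional affine subspaces ($j$-flats) of $\mathbb{F}_q^n$. For $S \subset \mathbb{F}_q^n$, $E_j(S) = |S|/q^{n-j}$. A flat $R \in \mathcal{L}_j(\mathbb{F}_q^n)$ is $\sigma$-balanced with respect to $S$ if $\big||R \cap S| - E_j(S)\big| \leq \sigma E_j(S)$, and $\sigma$-unbalanced otherwise. *)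

From HB Require Import structures.
From mathcomp Require Import all_boot all_order all_algebra.
Set Implicit Arguments. Unset Strict Implicit. Unset Printing Implicit Defensive.
Import Order.TTheory GRing.Theory Num.Theory.
Local Open Scope ring_scope.

(* Ambient space F_q^n is 'rV[F]_n for a finite field F with q = #|F|. *)

Definition is_flat (F : finFieldType) (n j : nat) (R : {set 'rV[F]_n}) : bool :=
  [exists a : 'rV[F]_n, exists B : 'M[F]_(j, n),
     (\rank B == j) && (R == [set a + u *m B | u : 'rV[F]_j])].

Definition flats (F : finFieldType) (n j : nat) : {set {set 'rV[F]_n}} :=
  [set R | is_flat j R].

Definition Ej (K : realFieldType) (F : finFieldType) (n j : nat)
  (S : {set 'rV[F]_n}) : K :=
  (#|S|%:R) / ((#|F| ^ (n - j))%:R).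

Definition balanced (K : realFieldType) (F : finFieldType) (n j : nat)
  (sigma : K) (S R : {set 'rV[F]_n}) : bool :=
  `| (#|R :&: S|%:R : K) - Ej K j S | <= sigma * Ej K j S.

Definition unbalanced (K : realFieldType) (F : finFieldType) (n j : nat)
  (sigma : K) (S R : {set 'rV[F]_n}) : bool :=
  ~~ balanced j sigma S R.

Definition prob_unbalanced_sub (K : realFieldType) (F : finFieldType)
  (n j : nat) (sigma : K) (S T : {set 'rV[F]_n}) : K :=
  (#|[set R in flats F n j | (R \subset T) && unbalanced j sigma S R]|%:R)
  / (#|[set R in flats F n j | R \subset T]|%:R).

(* Parametrize the k-flat T by F^k.  All points of F^k lie on equally many
   j-flats (translations), and so do all pairs of distinct points (the affine
   group is transitive on them); double counting then shows that a uniformly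
   random j-flat R contains a point with probability q^-(k-j) and two distinct
   points with probability at most q^-2(k-j).  Hence X = |R :&: S| has mean
   mu = |T :&: S| / q^(k-j) and variance at most mu.  As T is tau-unbalanced,
   |mu - E_j(S)| > tau E_j(S), and Chebyshev's inequality bounds the fraction
   of sigma-balanced R by (1 + tau) / ((tau - sigma)^2 E_j(S)) <= (1 + tau) /
   ((tau - sigma)^2 q). *)

From HB Require Import structures.
From mathcomp Require Import all_boot all_order all_algebra.
From mathcomp Require Import zify.
From mathcomp.algebra_tactics Require Import ring lra.
Set Implicit Arguments. Unset Strict Implicit. Unset Printing Implicit Defensive.
Import Order.TTheory GRing.Theory Num.Theory.
Local Open Scope ring_scope.

Lemma card_set_cond_sum (T : finType) (A : {set T}) (P : pred T) :
  #|[set x in A | P x]| = (\sum_(x in A) P x)%N.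
Proof.
by rewrite -sum1dep_card big_mkcondr /=; apply: eq_bigr => x _; case: (P x).
Qed.

Lemma card_field_gt0 (F : finFieldType) : (0 < #|F|)%N.
Proof. exact: ltnW (card_finNzRing_gt1 F). Qed.

Section DoubleCounting.
Variable V : finType.
Implicit Types (Fam : {set {set V}}) (A R : {set V}).

Lemma card_setI_sum R A : #|R :&: A| = (\sum_(x in A) (x \in R))%N.
Proof. by rewrite -card_set_cond_sum; apply: eq_card => x; rewrite !inE andbC. Qed.

Lemma sum_card_incident Fam A :
  (\sum_(x in A) #|[set R in Fam | x \in R]|)%N = (\sum_(R in Fam) #|R :&: A|)%N.
Proof.
under [RHS]eq_bigr do rewrite card_setI_sum.
by rewrite exchange_big; apply: eq_bigr => x _; rewrite card_set_cond_sum.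
Qed.

Lemma sum_card_incident_pair Fam A :
  (\sum_(x in A) \sum_(y in A) #|[set R in Fam | (x \in R) && (y \in R)]|)%N
  = (\sum_(R in Fam) #|R :&: A| ^ 2)%N.
Proof.
transitivity (\sum_(x in A) \sum_(R in Fam) \sum_(y in A)
                ((x \in R) && (y \in R) : nat))%N.
  apply: eq_bigr => x _; rewrite exchange_big; apply: eq_bigr => y _.
  by rewrite card_set_cond_sum.
rewrite exchange_big; apply: eq_bigr => R _; rewrite expnS expn1 card_setI_sum big_distrl.
apply: eq_bigr => x _; rewrite big_distrr; apply: eq_bigr => y _.
by case: (x \in R); case: (y \in R).
Qed.

End DoubleCounting.

Section IncidenceVariance.
Variables (K : realFieldType) (V : finType) (Fam : {set {set V}}) (A : {set V}).
Variable r : nat.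
Hypothesis r_gt0 : (0 < r)%N.
Hypothesis incidence1 :
  forall x, x \in A -> (r * #|[set R in Fam | x \in R]|)%N = #|Fam|.
Hypothesis incidence2 : forall x y, x \in A -> y \in A -> x != y ->
  (r ^ 2 * #|[set R in Fam | (x \in R) && (y \in R)]| <= #|Fam|)%N.

Lemma sum_card_setI : (r * \sum_(R in Fam) #|R :&: A|)%N = (#|A| * #|Fam|)%N.
Proof.
rewrite -sum_card_incident big_distrr /=.
by rewrite (eq_bigr (fun _ => #|Fam|)) ?sum_nat_const // => x /incidence1.
Qed.

Lemma sum_card_setI_sq :
  (r ^ 2 * \sum_(R in Fam) #|R :&: A| ^ 2 <= #|A| ^ 2 * #|Fam| + #|A| * (r * #|Fam|))%N.
Proof.
have pair_bound x y : x \in A -> y \in A ->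
    (r ^ 2 * #|[set R in Fam | (x \in R) && (y \in R)]|
      <= #|Fam| + (x == y) * (r * #|Fam|))%N.
  move=> xA yA; have [<-|nxy] := eqVneq x y; last first.
    by rewrite mul0n addn0 incidence2.
  rewrite (eq_card (B := [set R in Fam | x \in R])) => [|R]; last first.
    by rewrite !inE andbb.
  by rewrite mul1n expnS expn1 -mulnA incidence1 ?leq_addl.
rewrite -sum_card_incident_pair big_distrr /=.
apply: (@leq_trans (\sum_(x in A) \sum_(y in A) (#|Fam| + (x == y) * (r * #|Fam|)))%N).
  apply: leq_sum => x xA; rewrite big_distrr /=.
  by apply: leq_sum => y yA; apply: pair_bound.
rewrite (eq_bigr (fun _ => #|A| * #|Fam| + r * #|Fam|))%N; last first.
  move=> x xA; rewrite big_split /= sum_nat_const (bigD1 x) //= eqxx mul1n.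
  by rewrite big1 ?addn0 // => y /andP[_ /negbTE]; rewrite eq_sym => ->.
by rewrite sum_nat_const mulnDr mulnA expnS expn1.
Qed.

Lemma incidence_variance :
  \sum_(R in Fam) ((#|R :&: A|%:R - #|A|%:R / r%:R) ^+ 2 : K)
    <= #|Fam|%:R * (#|A|%:R / r%:R).
Proof.
have r_neq0 : (r%:R : K) != 0 by rewrite pnatr_eq0 -lt0n.
set X := fun R => (#|R :&: A|%:R : K).
set mu := #|A|%:R / r%:R.
have sum1 : \sum_(R in Fam) X R = #|A|%:R * #|Fam|%:R / r%:R.
  by rewrite -natr_sum -natrM -sum_card_setI natrM mulrC mulKf.
have sum2 : \sum_(R in Fam) X R ^+ 2
    <= (#|A|%:R ^+ 2 * #|Fam|%:R + #|A|%:R * (r%:R * #|Fam|%:R)) / r%:R ^+ 2.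
  rewrite ler_pdivlMr ?exprn_gt0 ?ltr0n // mulrC.
  under eq_bigr do rewrite /X -natrX.
  by rewrite -natr_sum -!natrX -!natrM -natrD ler_nat sum_card_setI_sq.
rewrite (eq_bigr (fun R => X R ^+ 2 + (- (2 * mu)) * X R + mu ^+ 2)); last first.
  by move=> R _; ring.
rewrite !big_split /= -mulr_sumr sumr_const sum1 -mulr_natr.
apply: le_trans (lerD (lerD sum2 (lexx _)) (lexx _)) _.
by rewrite le_eqVlt; apply/predU1l; rewrite /mu; field.
Qed.

End IncidenceVariance.

Section Chebyshev.
Variable K : realFieldType.

Lemma card_far_from_mean (I : finType) (A : {set I}) (X : I -> K) (mu d : K) :
  0 <= d ->
  #|[set i in A | d <= `|X i - mu|]|%:R * d ^+ 2 <= \sum_(i in A) (X i - mu) ^+ 2.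
Proof.
move=> d_ge0; rewrite (bigID (fun i => d <= `|X i - mu|)) /=.
apply: ler_wpDr; first by apply: sumr_ge0 => i _; apply: sqr_ge0.
rewrite mulr_natl -sumr_const; under [leLHS]eq_bigl do rewrite inE.
apply: ler_sum => i /andP[_ le_d].
by rewrite -(real_normK (num_real (X i - mu))) lerXn2r // nnegrE (le_trans d_ge0).
Qed.

Lemma unbalanced_gap (sigma tau E D : K) :
  0 < sigma -> sigma < tau -> 0 < E -> tau * E < D ->
  (E + D) * ((tau - sigma) ^+ 2 * E) <= (1 + tau) * (D - sigma * E) ^+ 2.
Proof.
move=> s_gt0 lt_st E_gt0 lt_D.
(* With D = tau E + t and t > 0, the difference of the two sides is a sum of
   nonnegative terms. *)
have t_gt0 : 0 < D - tau * E by rewrite subr_gt0.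
set t := D - tau * E in t_gt0 *.
have -> : D = tau * E + t by rewrite /t addrC subrK.
have -> : (1 + tau) * (tau * E + t - sigma * E) ^+ 2 =
   (E + (tau * E + t)) * ((tau - sigma) ^+ 2 * E) +
   (t * (tau - sigma) * E * (2 + tau + sigma) + (1 + tau) * t ^+ 2) by ring.
rewrite lerDl addr_ge0 // mulr_ge0 ?sqr_ge0 // ?mulr_ge0 ?ltW ?subr_gt0 //; lra.
Qed.

Lemma chebyshev_unbalanced (I : finType) (A : {set I}) (X : I -> K)
    (mu E sigma tau : K) :
  0 < sigma -> sigma < tau -> 0 < E -> tau * E < `|mu - E| ->
  \sum_(i in A) (X i - mu) ^+ 2 <= #|A|%:R * mu -> (0 < #|A|)%N ->
  1 - (1 + tau) / ((tau - sigma) ^+ 2 * E) <=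
    #|[set i in A | ~~ (`|X i - E| <= sigma * E)]|%:R / #|A|%:R.
Proof.
move=> s_gt0 lt_st E_gt0 far_mu var_le A_gt0.
set D := `|mu - E| in far_mu; set B := [set i in A | `|X i - E| <= sigma * E].
have gap_gt0 : 0 < D - sigma * E.
  by rewrite subr_gt0 (le_lt_trans _ far_mu) // ler_pM2r // ltW.
have B_far : #|B|%:R * (D - sigma * E) ^+ 2 <= #|A|%:R * mu.
  apply: le_trans var_le; apply: le_trans (card_far_from_mean A X mu (ltW gap_gt0)).
  rewrite ler_wpM2r ?sqr_ge0 // ler_nat; apply/subset_leq_card/subsetP => i.
  rewrite !inE => /andP[-> le_Xi] /=; rewrite lerBlDr.
  by apply: le_trans (ler_distD (X i) mu E) _; rewrite [`|mu - _|]distrC lerD2l.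
have mu_le : mu <= E + D by rewrite -lerBlDl ler_norm.
have A_pos : (0 : K) < #|A|%:R by rewrite ltr0n.
have c_gt0 : 0 < (tau - sigma) ^+ 2 * E by rewrite mulr_gt0 ?exprn_gt0 ?subr_gt0.
have B_le : #|B|%:R * ((tau - sigma) ^+ 2 * E) <= #|A|%:R * (1 + tau).
  rewrite -(ler_pM2r (exprn_gt0 2 gap_gt0)) mulrAC.
  apply: le_trans (_ : #|A|%:R * mu * ((tau - sigma) ^+ 2 * E) <= _).
    by rewrite ler_pM2r.
  rewrite -[leLHS]mulrA -[leRHS]mulrA ler_pM2l //.
  by apply: le_trans (unbalanced_gap s_gt0 lt_st E_gt0 far_mu); rewrite ler_pM2r.
have card_split : addn #|B| #|[set i in A | ~~ (`|X i - E| <= sigma * E)]| = #|A|.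
  rewrite -(cardsID [set i | `|X i - E| <= sigma * E] A).
  by congr addn; apply: eq_card => i; rewrite !inE andbC.
rewrite -(addKn #|B| #|[set i in A | _]|) card_split natrB; last first.
  by rewrite -card_split leq_addr.
rewrite mulrBl divff ?gt_eqF // lerD2l lerN2 ler_pdivrMr // mulrAC ler_pdivlMr //.
by rewrite [_ * #|A|%:R]mulrC.
Qed.

End Chebyshev.

Section AffineFlats.
Variable F : finFieldType.
Implicit Types m n p : nat.

Lemma flatP n p (R : {set 'rV[F]_n}) :
  reflect (exists a (B : 'M_(p, n)), row_free B /\ R = [set a + u *m B | u : 'rV_p])
          (R \in flats F n p).
Proof.
rewrite inE; apply: (iffP existsP) => [[a /existsP[B /andP[rB /eqP eR]]]|[a [B [rB eR]]]].
  by exists a, B.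
by exists a; apply/existsP; exists B; rewrite eR eqxx andbT.
Qed.

Lemma card_flat n p (R : {set 'rV[F]_n}) : R \in flats F n p -> #|R| = (#|F| ^ p)%N.
Proof.
case/flatP=> a [B [rB ->]]; rewrite card_imset ?card_mx ?mul1n //.
by move=> u v /addrI; apply: row_free_inj.
Qed.

Lemma mem_affine_image m n (b : 'rV[F]_n) (M : 'M_(m, n)) (Q : {set 'rV_m}) u :
  row_free M -> (b + u *m M \in [set b + v *m M | v in Q]) = (u \in Q).
Proof.
move=> rM; apply/imsetP/idP => [[v vQ /addrI /(row_free_inj rM) -> //]|uQ].
by exists u.
Qed.

Lemma mem_affine_image0 m n (b : 'rV[F]_n) (M : 'M_(m, n)) (Q : {set 'rV_m}) :
  row_free M -> (b \in [set b + v *m M | v in Q]) = (0 \in Q).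
Proof. by move=> rM; rewrite -{1}(addr0 b) -(mul0mx 1 M) mem_affine_image. Qed.

Lemma affine_image_flat m n p (b : 'rV[F]_n) (M : 'M_(m, n)) (Q : {set 'rV_m}) :
  row_free M -> Q \in flats F m p -> [set b + u *m M | u in Q] \in flats F n p.
Proof.
move=> rM /flatP[c [C [rC ->]]]; apply/flatP; exists (b + c *m M), (C *m M).
split; first by rewrite /row_free mxrankMfree.
by rewrite -imset_comp; apply: eq_imset => u /=; rewrite mulmxDl mulmxA addrA.
Qed.

Lemma affine_preimage_flat m n p (b : 'rV[F]_n) (M : 'M_(m, n)) (R : {set 'rV_n}) :
  R \in flats F n p -> R \subset [set b + u *m M | u : 'rV_m] ->
  exists2 Q, Q \in flats F m p & R = [set b + u *m M | u in Q].
Proof.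
case/flatP=> a [C [rC eR]] sRT.
have inT (v : 'rV_p) : exists c : 'rV_m, a + v *m C = b + c *m M.
  have /(subsetP sRT)/imsetP[c _ ->] : a + v *m C \in R by rewrite eR; apply: imset_f.
  by exists c.
have [c0 ec0] := inT 0; rewrite mul0mx addr0 in ec0.
have sCM : (C <= M)%MS.
  apply/row_subP => i; have [ci eci] := inT 'e_i.
  rewrite rowE (_ : 'e_i *m C = (ci - c0) *m M) ?submxMl //.
  by apply: (addrI a); rewrite eci {1}ec0 mulmxBl -addrA [c0 *m M + _]addrC subrK.
set D := C *m pinvmx M.
have eDM : D *m M = C by rewrite mulmxKpV.
exists [set c0 + v *m D | v : 'rV_p].
  apply/flatP; exists c0, D; split=> //.
  by rewrite /row_free eqn_leq rank_leq_row -{1}(eqP rC) -eDM mxrankM_maxl.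
rewrite eR -imset_comp; apply: eq_imset => v /=.
by rewrite mulmxDl addrA -ec0 -mulmxA eDM.
Qed.

Lemma card_subflats_affine m n p (b : 'rV[F]_n) (M : 'M_(m, n))
    (P : pred {set 'rV[F]_n}) : row_free M ->
  #|[set R in flats F n p | (R \subset [set b + u *m M | u : 'rV_m]) && P R]| =
  #|[set Q in flats F m p | P [set b + u *m M | u in Q]]|.
Proof.
move=> rM; set phi := fun Q : {set 'rV_m} => [set b + u *m M | u in Q].
have phi_inj : injective phi.
  by apply: imset_inj => u v /addrI; apply: row_free_inj.
rewrite -(card_imset _ phi_inj); apply: eq_card => R; rewrite inE.
apply/andP/imsetP => [[fR /andP[sRT PR]]|[Q + ->]].
  by have [Q fQ eR] := affine_preimage_flat fR sRT; exists Q; rewrite // inE fQ -eR.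
rewrite inE => /andP[fQ PQ]; split; first exact: affine_image_flat.
by rewrite PQ andbT; apply/subsetP => _ /imsetP[u _ ->]; apply: imset_f.
Qed.

Lemma card_flats_affine m p (b : 'rV[F]_m) (M : 'M_m) (P : pred {set 'rV[F]_m}) :
  M \in unitmx ->
  #|[set Q in flats F m p | P Q]| =
  #|[set Q in flats F m p | P [set b + u *m M | u in Q]]|.
Proof.
rewrite -row_free_unit => rM; rewrite -card_subflats_affine //.
have onto (Q : {set 'rV_m}) : Q \subset [set b + u *m M | u : 'rV_m].
  apply/subsetP => x _; apply/imsetP; exists ((x - b) *m invmx M) => //.
  by rewrite mulmxKV 1?addrC ?subrK // -row_free_unit.
by apply: eq_card => Q; rewrite !inE onto.
Qed.

Lemma unitmx_transitive_rV m (z w : 'rV[F]_m) :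
  z != 0 -> w != 0 -> exists2 g, g \in unitmx & z *m g = w.
Proof.
move=> nz nw; have rz : row_free z by rewrite /row_free rank_rV nz.
have ezw : z *m (pinvmx z *m w) = w by rewrite mulmxA mulmxVp ?mul1mx.
have [|g ug ezg] := @complete_unitmx _ _ _ z (pinvmx z *m w).
  by rewrite ezw !rank_rV nz nw.
by exists g; rewrite // -ezg.
Qed.

End AffineFlats.

Section FlatIncidence.
Variables (F : finFieldType) (m p : nat).
Local Notation q := #|F|.
Local Notation flats_through x :=
  [set Q in flats F m p | (x : 'rV[F]_m)%R \in Q].
Local Notation flats_through2 x y :=
  [set Q in flats F m p | ((x : 'rV[F]_m)%R \in Q) && ((y : 'rV[F]_m)%R \in Q)].

Lemma card_flats_through (x : 'rV[F]_m) : #|flats_through x| = #|flats_through 0|.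
Proof.
rewrite (card_flats_affine p x (M := 1%:M)) ?unitmx1 //; apply: eq_card => Q.
by rewrite !inE mem_affine_image0 ?row_free_unit ?unitmx1.
Qed.

Lemma card_flats_through2 (x y z : 'rV[F]_m) :
  x != y -> z != 0 -> #|flats_through2 x y| = #|flats_through2 0 z|.
Proof.
move=> nxy nz; have [|g ug ezg] := unitmx_transitive_rV (w := y - x) nz.
  by rewrite subr_eq0 eq_sym.
have rg : row_free g by rewrite row_free_unit.
rewrite (card_flats_affine p x (M := g)) //; apply: eq_card => Q.
have -> : y = x + z *m g by rewrite ezg addrC subrK.
by rewrite !inE mem_affine_image0 // mem_affine_image.
Qed.

Hypothesis le_pm : (p <= m)%N.

Let expq_split : (q ^ m = q ^ (m - p) * q ^ p)%N.
Proof. by rewrite -expnD subnK. Qed.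

Lemma card_flats_through_point (x : 'rV[F]_m) :
  (q ^ (m - p) * #|flats_through x|)%N = #|flats F m p|.
Proof.
have e : (\sum_(y in [set: 'rV[F]_m]) #|flats_through 0| =
           \sum_(Q in flats F m p) q ^ p)%N.
  under [LHS]eq_bigr => y _ do rewrite -(card_flats_through y).
  by rewrite sum_card_incident; apply: eq_bigr => Q fQ; rewrite setIT (card_flat fQ).
move: e; rewrite !sum_nat_const cardsT card_mx mul1n expq_split card_flats_through.
by rewrite mulnAC => /eqP; rewrite eqn_pmul2r ?expn_gt0 ?card_field_gt0 // => /eqP.
Qed.

Lemma card_flats_through_pair (x y : 'rV[F]_m) : x != y ->
  ((q ^ (m - p)) ^ 2 * #|flats_through2 x y| <= #|flats F m p|)%N.
Proof.
move=> nxy; set c := #|flats_through2 x y|; set N0 := #|flats_through 0|.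
have c_le : (c <= N0)%N.
  rewrite /N0 -(card_flats_through x); apply: subset_leq_card.
  by apply/subsetP => Q; rewrite !inE => /andP[-> /andP[]].
(* Count the pairs (w, Q) with 0 and w in Q. *)
have double_count : (N0 * q ^ p = N0 + (q ^ m).-1 * c)%N.
  transitivity (\sum_(R in flats_through 0) #|R :&: [set: 'rV[F]_m]|)%N.
    rewrite -sum_nat_const; apply: eq_bigr => Q.
    by rewrite inE => /andP[fQ _]; rewrite setIT (card_flat fQ).
  rewrite -sum_card_incident (bigD1 0) ?inE //=; congr addn.
    by apply: eq_card => Q; rewrite !inE -andbA andbb.
  rewrite (eq_bigr (fun _ => c)) => [|w /andP[_ nw]]; last first.
    by rewrite /c (card_flats_through2 nxy nw); apply: eq_card => Q; rewrite !inE andbA.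
  rewrite sum_nat_const (@eq_card _ _ (predC1 0)) ?cardC1 ?card_mx ?mul1n //.
  by move=> w; rewrite -topredE /= in_setT.
have := card_flats_through_point 0; rewrite -/N0 => <-.
have a_gt0 : (0 < q ^ (m - p))%N by rewrite expn_gt0 card_field_gt0.
have b_gt0 : (0 < q ^ p)%N by rewrite expn_gt0 card_field_gt0.
move: double_count a_gt0 b_gt0; rewrite expq_split; move: (q ^ (m - p))%N (q ^ p)%N => a b.
nia.
Qed.

End FlatIncidence.

Definition subflats (F : finFieldType) n p (T : {set 'rV[F]_n}) :=
  [set R in flats F n p | R \subset T].

Section Subflats.
Variables (F : finFieldType) (n k p : nat) (T : {set 'rV[F]_n}).
Hypotheses (flatT : T \in flats F n k) (le_pk : (p <= k)%N).
Local Notation q := #|F|.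

Lemma card_subflats_affine_cond a (B : 'M[F]_(k, n)) (P : pred {set 'rV[F]_n}) :
  row_free B ->
  #|[set R in subflats p [set a + u *m B | u : 'rV_k] | P R]| =
  #|[set Q in flats F k p | P [set a + u *m B | u in Q]]|.
Proof.
by move=> rB; rewrite -card_subflats_affine //; apply: eq_card => R; rewrite !inE andbA.
Qed.

Lemma card_subflats : #|subflats p T| = #|flats F k p|.
Proof.
case/flatP: flatT => a [B [rB ->]].
have := card_subflats_affine_cond a predT rB.
by rewrite !setIdE !setIT.
Qed.

Lemma card_subflats_through_point x : x \in T ->
  (q ^ (k - p) * #|[set R in subflats p T | x \in R]|)%N = #|subflats p T|.
Proof.
rewrite card_subflats; case/flatP: flatT => a [B [rB ->]] /imsetP[u _ ->].
rewrite card_subflats_affine_cond // -(card_flats_through_point le_pk u).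
by congr (_ * _)%N; apply: eq_card => Q; rewrite !inE mem_affine_image.
Qed.

Lemma card_subflats_through_pair x y : x \in T -> y \in T -> x != y ->
  ((q ^ (k - p)) ^ 2 * #|[set R in subflats p T | (x \in R) && (y \in R)]|
    <= #|subflats p T|)%N.
Proof.
rewrite card_subflats; case/flatP: flatT => a [B [rB ->]].
move=> /imsetP[u _ ->] /imsetP[v _ ->] nxy.
rewrite card_subflats_affine_cond //.
have nuv : u != v by apply: contraNneq nxy => ->.
apply: leq_trans (card_flats_through_pair le_pk nuv); rewrite leq_eqVlt; apply/predU1l.
by congr (_ * _)%N; apply: eq_card => Q; rewrite !inE !mem_affine_image.
Qed.

Lemma subflats_nonempty : (0 < #|subflats p T|)%N.
Proof.
rewrite card_subflats; apply/card_gt0P.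
exists [set 0 + u *m (pid_mx p : 'M[F]_(p, k)) | u : 'rV_p].
by apply/flatP; exists 0, (pid_mx p); rewrite /row_free rank_pid_mx.
Qed.

End Subflats.

Lemma Ej_scale (K : realFieldType) (F : finFieldType) n j k (S : {set 'rV[F]_n}) :
  (j <= k <= n)%N -> Ej K k S = (#|F| ^ (k - j))%:R * Ej K j S.
Proof.
case/andP=> le_jk le_kn; rewrite /Ej (_ : (n - j = (n - k) + (k - j))%N); last by lia.
by rewrite expnD natrM; field; rewrite !pnatr_eq0 -!lt0n !expn_gt0 card_field_gt0.
Qed.

Theorem prob_unbalanced_subflats_ge (K : realFieldType) (F : finFieldType) (n j k : nat)
    (S T : {set 'rV[F]_n}) (sigma tau : K) :
  0 < sigma -> sigma < tau -> (j <= k <= n)%N -> 0 < Ej K j S ->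
  T \in flats F n k -> unbalanced k tau S T ->
  1 - (1 + tau) / ((tau - sigma) ^+ 2 * Ej K j S) <= prob_unbalanced_sub j sigma S T.
Proof.
move=> s_gt0 lt_st /[dup] le_jkn /andP[le_jk _] E_gt0 flatT unbalT.
pose r := (#|F| ^ (k - j))%N; pose A := T :&: S; pose mu : K := #|A|%:R / r%:R.
have r_gt0 : (0 < r)%N by rewrite expn_gt0 card_field_gt0.
have AT x : x \in A -> x \in T by rewrite inE => /andP[].
have var : \sum_(R in subflats j T) (#|R :&: S|%:R - mu) ^+ 2
             <= #|subflats j T|%:R * mu.
  have := incidence_variance K r_gt0
    (fun x xA => card_subflats_through_point flatT le_jk (AT x xA))
    (fun x y xA yA => card_subflats_through_pair flatT le_jk (AT x xA) (AT y yA)).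
  congr (_ <= _); apply: eq_bigr => R; rewrite inE => /andP[_ sRT].
  by rewrite /A setIA (setIidPl sRT).
have far_mu : tau * Ej K j S < `|mu - Ej K j S|.
  have r_pos : (0 : K) < r%:R by rewrite ltr0n.
  move: unbalT; rewrite /unbalanced /balanced -ltNge (Ej_scale K S le_jkn) -/r.
  rewrite -[#|T :&: S|%:R](divfK (lt0r_neq0 r_pos)) -/A -/mu [mu * _]mulrC -mulrBr.
  by rewrite normrM gtr0_norm // mulrCA ltr_pM2l.
have := chebyshev_unbalanced s_gt0 lt_st E_gt0 far_mu var (subflats_nonempty flatT le_jk).
by congr (_ <= _%:R / _); apply: eq_card => R; rewrite !inE andbA.
Qed.

Theorem mainTheorem11 (K : realFieldType) (F : finFieldType) (n k : nat)
  (S : {set 'rV[F]_n}) (sigma tau : K) (T : {set 'rV[F]_n}) :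
  0 < sigma -> sigma < tau ->
  (3 <= k)%N -> (k <= n)%N ->
  (#|F|%:R : K) <= Ej K (k - 2) S ->
  T \in flats F n k ->
  unbalanced k tau S T ->
  1 - (1 + tau) / ((tau - sigma) ^+ 2 * #|F|%:R)
    <= prob_unbalanced_sub (k - 2) sigma S T.
Proof.
move=> s_gt0 lt_st _ le_kn q_le_E flatT unbalT.
have q_gt0 : (0 : K) < #|F|%:R by rewrite ltr0n card_field_gt0.
have E_gt0 := lt_le_trans q_gt0 q_le_E.
have le_dims : (k - 2 <= k <= n)%N by rewrite leq_subr le_kn.
apply: le_trans (prob_unbalanced_subflats_ge s_gt0 lt_st le_dims E_gt0 flatT unbalT).
have c_gt0 : 0 < (tau - sigma) ^+ 2 by rewrite exprn_gt0 // subr_gt0.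
have tau1_ge0 : 0 <= 1 + tau by lra.
rewrite lerD2l lerN2 ler_wpM2l // lef_pV2 ?posrE ?ler_pM2l //.
all: exact: mulr_gt0.
Qed.
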